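(* Let $s\ge1$ be an integer and let $(G,Z)$ be a dyadic plantation. Then there exists $X\subseteq Z$ with $|X|\le 2\phi(s)$ such that exploding the vertices of $X$ yields a dyadic plantation with at most $2|Z|$ binary vertices.
   Context: Graphs are finite and simple. Two subgraphs are anticomplete if their vertex sets are disjoint and no edge joins them. $G$ is $s\mathcal{O}$-free if no $s$ cycles of $G$ are pairwise vertex-disjoint and pairwise anticomplete. $Z\subseteq V(G)$ is cycle-hitting if every cycle of $G$ has a vertex in $Z$. A plantation is a pair $(G,Z)$ with $G$ an $s\mathcal{O}$-free graph and $Z$ cycle-hitting. $(G,Z)$ is dyadic if $Z$ is stable and every vertex of $V(G)\setminus Z$ has at most two neighbours in $Z$; a vertex of $V(G)\setminus Z$ is binary if it has exactly two neighbours in $Z$. Exploding $v\in Z$ produces $(G',Z\setminus\{v\})$, where $G'$ is obtained from $G$ by deleting $v$ and all its neighbours in $V(G)\setminus Z$; exploding a set means exploding its vertices one at a time. $\phi(s)\ge0$ denotes a number (which exists by the Erdős–Pósa theorem) such that every multigraph in which no $s$ cycles are pairwise vertex-disjoint has a set of at most $\phi(s)$ vertices meeting every cycle; in multigraphs, loops and pairs of parallel edges count as cycles. *)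

From mathcomp Require Import all_boot.
Set Implicit Arguments. Unset Strict Implicit. Unset Printing Implicit Defensive.

(* A multigraph: vertex type V, edge type E, each edge with two (possibly equal) ends. *)

Definition joins (V E : finType) (ends : E -> V * V) (f : E) (a b : V) : bool :=
  (ends f == (a, b)) || (ends f == (b, a)).

(* A cycle of a multigraph: distinct vertices v_0..v_{k-1} (k >= 1) and distinct
   edges f_0..f_{k-1}, f_i joining v_i and v_{(i+1) mod k}.  k = 1 is a loop,
   k = 2 a pair of parallel edges. *)
Definition mcycle (V E : finType) (ends : E -> V * V) (vs : seq V) (es : seq E) : Prop :=
  [/\ 0 < size vs, size es = size vs, uniq vs, uniq es &
      forall i, i < size vs ->
        exists (v0 : V) (f0 : E),
          joins ends (nth f0 es i) (nth v0 vs i) (nth v0 vs ((i.+1) %% size vs))].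

Definition erdos_posa_bound (phi : nat -> nat) : Prop :=
  forall (s : nat) (V E : finType) (ends : E -> V * V),
    ~ (exists C : 'I_s -> seq V * seq E,
          (forall i, mcycle ends (C i).1 (C i).2) /\
          (forall i j, i != j -> forall v, v \in (C i).1 -> v \notin (C j).1)) ->
    exists X : {set V}, #|X| <= phi s /\
      forall vs es, mcycle ends vs es -> has (fun v => v \in X) vs.

(* A finite simple graph: a symmetric irreflexive relation e on a finType T;
   we work with induced subgraphs on a vertex set W : {set T}. *)
Definition simple_graph (T : finType) (e : rel T) : Prop := symmetric e /\ irreflexive e.

Definition is_cycle (T : finType) (e : rel T) (W : {set T}) (c : seq T) : Prop :=
  [/\ 2 < size c, uniq c, {subset c <= W} & cycle e c].

Definition sO_free (T : finType) (e : rel T) (s : nat) (W : {set T}) : Prop :=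
  ~ (exists C : 'I_s -> seq T,
        (forall i, is_cycle e W (C i)) /\
        (forall i j, i != j -> forall u v, u \in C i -> v \in C j ->
              u != v /\ ~~ e u v)).

Definition cycle_hitting (T : finType) (e : rel T) (W Z : {set T}) : Prop :=
  forall c, is_cycle e W c -> has (fun v => v \in Z) c.

Definition plantation (T : finType) (e : rel T) (s : nat) (W Z : {set T}) : Prop :=
  [/\ Z \subset W, sO_free e s W & cycle_hitting e W Z].

Definition nbrs_in (T : finType) (e : rel T) (Z : {set T}) (v : T) : {set T} :=
  [set u in Z | e v u].

Definition dyadic (T : finType) (e : rel T) (W Z : {set T}) : Prop :=
  (forall u v, u \in Z -> v \in Z -> ~~ e u v) /\
  (forall v, v \in W :\: Z -> #|nbrs_in e Z v| <= 2).

Definition binary_vertices (T : finType) (e : rel T) (W Z : {set T}) : {set T} :=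
  [set v in W :\: Z | #|nbrs_in e Z v| == 2].

Definition explode1 (T : finType) (e : rel T) (p : {set T} * {set T}) (v : T)
  : {set T} * {set T} :=
  let: (W, Z) := p in
  ((W :\ v) :\: [set u in W :\: Z | e v u], Z :\ v).

Definition explode (T : finType) (e : rel T) (W Z X : {set T}) : {set T} * {set T} :=
  foldl (explode1 e) (W, Z) (enum X).

(* Let B be the set of binary vertices. Since Z meets every cycle and misses B,
   G[B] is a forest, so B is the union of two stable sets B1 and B2. For a stable
   Bi, let H be the multigraph on Z whose edges are the vertices of Bi, each joining
   its two neighbours in Z. A cycle z0 b0 z1 b1 ... of H is a cycle of G, and
   vertex-disjoint cycles of H are vertex-disjoint and anticomplete in G: Z and Bi
   are stable, and every neighbour in Z of an edge b lies on the H-cycle through b.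
   Hence the Erdős–Pósa bound yields Xi ⊆ Z with |Xi| <= phi s meeting every cycle
   of H. After exploding X1 ∪ X2 every binary vertex is a vertex of B1 or B2 with no
   neighbour in X1 ∪ X2, that is an edge of the forest H - Xi, and a forest on at
   most |Z| vertices has at most |Z| edges. *)

From mathcomp Require Import all_boot.
Set Implicit Arguments. Unset Strict Implicit. Unset Printing Implicit Defensive.

Section Multigraph.
Variables (V E : finType) (ends : E -> V * V).

Definition incident (f : E) (v : V) := (v == (ends f).1) || (v == (ends f).2).

Definition acyclic_on (F : {set E}) :=
  forall vs es, mcycle ends vs es -> ~ {subset es <= F}.

Lemma joins_sym f a b : joins ends f a b = joins ends f b a.
Proof. by rewrite /joins orbC. Qed.

Lemma joins_incident f a b x : joins ends f a b -> incident f x -> x = a \/ x = b.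
Proof. by rewrite /joins /incident => /orP[]/eqP-> /orP[]/eqP->; tauto. Qed.

Lemma incident_joins f x : incident f x -> exists y, joins ends f y x.
Proof.
rewrite /incident /joins; case: (ends f) => a b /= /orP[]/eqP->.
  by exists b; rewrite eqxx orbT.
by exists a; rewrite eqxx.
Qed.

Lemma mcycle_joins vs es x0 f0 : mcycle ends vs es ->
  forall i, i < size vs ->
    joins ends (nth f0 es i) (nth x0 vs i) (nth x0 vs (i.+1 %% size vs)).
Proof.
case=> vs_gt0 size_es _ _ hj i lt_i; have [y0 [g0]] := hj i lt_i.
have lt_i1 : i.+1 %% size vs < size vs by rewrite ltn_pmod.
by rewrite (set_nth_default x0 _ lt_i) (set_nth_default x0 _ lt_i1)
           (set_nth_default f0) ?size_es.
Qed.

(* A trail is stored newest vertex first: [nth es i] joins [nth vs i] and [nth vs i.+1]. *)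
Definition trail (vs : seq V) (es : seq E) :=
  [/\ size vs = (size es).+1, uniq vs, uniq es &
      forall x0 f0 i, i < size es ->
        joins ends (nth f0 es i) (nth x0 vs i) (nth x0 vs i.+1)].

Lemma trail_cons x vs es f y : trail (x :: vs) es -> joins ends f y x ->
  y \notin x :: vs -> f \notin es -> trail (y :: x :: vs) (f :: es).
Proof.
case=> size_vs uniq_vs uniq_es hj jf y_new f_new; split=> /=.
- by move: size_vs => /= ->.
- by rewrite y_new.
- by rewrite f_new.
by move=> x0 f0 [|i] //; rewrite ltnS; apply: hj.
Qed.

Lemma trail_incident_head x vs es f : trail (x :: vs) es -> f \in es ->
  incident f x -> ohead es = Some f.
Proof.
case=> size_vs uniq_vs _ hj /(nthP f)[[|i] lt_i ef] fx.
  by case: es ef lt_i {size_vs hj} => //= ? ? ->.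
have lt_vs : i.+1 < size vs by move: size_vs => /= [->].
have := hj x f i.+1 lt_i; rewrite ef => /joins_incident/(_ fx).
move: uniq_vs; rewrite /= => /andP[x_new _] [] x_eq; case/negP: x_new;
  by rewrite {1}x_eq mem_nth // ltnW.
Qed.

Lemma trail_close x vs es f y : trail (x :: vs) es -> joins ends f y x ->
  f \notin es -> y \in x :: vs ->
  let j := index y (x :: vs) in
  mcycle ends (take j.+1 (x :: vs)) (rcons (take j es) f).
Proof.
case=> size_vs uniq_vs uniq_es hj jf f_new y_old j.
have lt_j : j < size (x :: vs) by rewrite index_mem.
have size_es : size (take j es) = j by rewrite size_takel // -ltnS -size_vs.
have size_cyc : size (take j.+1 (x :: vs)) = j.+1 by rewrite size_takel.
split; rewrite ?size_cyc ?size_rcons ?size_es //.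
- exact: take_uniq.
- by rewrite rcons_uniq (take_uniq _ uniq_es) andbT (contra (@mem_take _ _ _ _)).
move=> i lt_i; exists x, f; rewrite nth_rcons size_es.
move: lt_i; rewrite ltnS leq_eqVlt => /orP[/eqP->|lt_ij].
  by rewrite ltnn eqxx modnn !nth_take // nth_index.
rewrite lt_ij modn_small ?ltnS // !nth_take ?ltnS ?(ltnW lt_ij) //.
by apply: hj; rewrite (leq_trans lt_ij) // -ltnS -size_vs.
Qed.

Section MinDegree.
Variables (A : {set V}) (F : {set E}).
Hypothesis ends_in : forall f, f \in F -> ((ends f).1 \in A) && ((ends f).2 \in A).

Lemma joins_in f a b : f \in F -> joins ends f a b -> a \in A.
Proof.
move=> /ends_in/andP[h1 h2]; rewrite /joins.
by case/orP=> /eqP E1; rewrite E1 /= in h1 h2.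
Qed.

Hypothesis deg2 : forall v, v \in A -> 1 < #|[set f in F | incident f v]|.

Lemma trail_extend_or_close x vs es : trail (x :: vs) es -> x \in A ->
  {subset es <= F} ->
  (exists y f, [/\ trail (y :: x :: vs) (f :: es), y \in A & f \in F]) \/
  exists vs' es', mcycle ends vs' es' /\ {subset es' <= F}.
Proof.
move=> tr xA esF.
have /card_gt1P[f1 [f2 []]] := deg2 xA; rewrite !inE => /andP[f1F f1x] /andP[f2F f2x] f12.
have [f [fF fx f_new]] : exists f, [/\ f \in F, incident f x & f \notin es].
  case: (boolP (f1 \in es)) => [f1es|]; last by exists f1.
  exists f2; split=> //; apply: contraNN f12 => f2es.
  have := trail_incident_head tr f2es f2x.
  by rewrite (trail_incident_head tr f1es f1x) => -[->].
have [y jf] := incident_joins fx.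
have yA := joins_in fF jf.
case: (boolP (y \in x :: vs)) => [y_old|y_new].
  right; do 2 eexists; split; first exact: trail_close tr jf f_new y_old.
  by move=> g; rewrite mem_rcons inE => /orP[/eqP->|/mem_take/esF].
by left; exists y, f; split; first exact: trail_cons tr jf y_new f_new.
Qed.

Lemma mcycle_of_min_degree x0 : x0 \in A ->
  exists vs es, mcycle ends vs es /\ {subset es <= F}.
Proof.
move=> x0A.
(* Trails cannot be extended forever: they have at most #|E| edges. *)
suff [[x [vs [es [tr _ _ size_es]]]]|//] : (exists x vs es,
    [/\ trail (x :: vs) es, x \in A, {subset es <= F} & size es = #|E|.+1]) \/
  exists vs es, mcycle ends vs es /\ {subset es <= F}.
  case: tr => _ _ uniq_es _.
  by move: (max_card (mem es)); rewrite (card_uniqP uniq_es) size_es ltnn.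
elim: #|E|.+1 => [|n [[x [vs [es [tr xA esF <-]]]]|cyc]]; last by right.
  by left; exists x0, [::], [::]; split=> //; split=> // ? ? [].
case: (trail_extend_or_close tr xA esF) => [[y [f [tr' yA fF]]]|]; last by right.
left; exists y, (x :: vs), (f :: es); split=> // g; rewrite inE.
by case/orP=> [/eqP->|/esF].
Qed.
End MinDegree.

Lemma card_acyclic_le (A : {set V}) (F : {set E}) :
  (forall f, f \in F -> ((ends f).1 \in A) && ((ends f).2 \in A)) ->
  acyclic_on F -> #|F| <= #|A|.
Proof.
elim: {A}_.+1 {-2}A (ltnSn #|A|) F => // n IH A ltAn F ends_in acyc.
case: (set_0Vmem A) => [A0|[x0 x0A]].
  case: (set_0Vmem F) => [->|[f /ends_in]]; first by rewrite cards0.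
  by rewrite A0 inE.
case: (boolP [exists v in A, #|[set f in F | incident f v]| <= 1]); last first.
  rewrite negb_exists => /forallP deg2.
  have [vs [es [cyc esF]]] : exists vs es, mcycle ends vs es /\ {subset es <= F}.
    apply: (mcycle_of_min_degree ends_in _ x0A) => v vA.
    by move: (deg2 v); rewrite vA ltnNge.
  by case: (acyc vs es cyc esF).
case/exists_inP=> v vA deg_v; set Fv := [set f in F | incident f v].
have le_rest : #|F :\: Fv| <= #|A :\ v|.
  apply: IH; first by move: ltAn; rewrite (cardsD1 v A) vA.
    move=> f; rewrite !inE => /andP[f_v fF]; move: f_v; rewrite fF /incident negb_or.
    by case/andP=> v1 v2; case/andP: (ends_in f fF) => -> ->; rewrite !(eq_sym _ v) v1 v2.
  by move=> vs es cyc esF; apply: (acyc vs es cyc) => f /esF; rewrite inE => /andP[].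
rewrite -(cardsID Fv F) (cardsD1 v A) vA add1n addnC -addn1 leq_add //.
by rewrite (leq_trans _ deg_v) // subset_leq_card // subsetIr.
Qed.
End Multigraph.

Lemma cycle_from_nth (X : Type) (r : rel X) (x0 : X) (vs : seq X) : 0 < size vs ->
  (forall i, i < size vs -> r (nth x0 vs i) (nth x0 vs (i.+1 %% size vs))) ->
  cycle r vs.
Proof.
case: vs => [//|x p] _ hr /=; apply/(pathP x0) => i; rewrite size_rcons ltnS => le_ip.
have := hr i; rewrite /= ltnS => /(_ le_ip).
rewrite -rcons_cons nth_rcons /= ltnS le_ip nth_rcons.
move: le_ip; rewrite leq_eqVlt => /orP[/eqP->|lt_ip]; first by rewrite modnn ltnn eqxx.
by rewrite lt_ip modn_small.
Qed.

Section Interleave.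
Variable X : eqType.

Definition interleave (s t : seq X) := flatten [seq [:: p.1; p.2] | p <- zip s t].

Lemma interleave_cons a s b t : interleave (a :: s) (b :: t) = a :: b :: interleave s t.
Proof. by []. Qed.

Lemma size_interleave s t : size t = size s -> size (interleave s t) = (size s).*2.
Proof. by elim: s t => [|a s IH] [|b t] //= [/IH->]. Qed.

Lemma nth_interleave x0 s t i : size t = size s ->
  nth x0 (interleave s t) i.*2 = nth x0 s i /\
  nth x0 (interleave s t) i.*2.+1 = nth x0 t i.
Proof.
elim: s t i => [|a s IH] [|b t] i //=; first by rewrite !nth_nil.
by case=> /IH; case: i => [|i] //=; rewrite doubleS.
Qed.

Lemma mem_interleave s t u : u \in interleave s t -> (u \in s) || (u \in t).
Proof.
elim: s t => [|a s IH] [|b t] //=; rewrite !inE => /or3P[->|->|/IH]; rewrite ?orbT //.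
by case/orP=> ->; rewrite !orbT.
Qed.

Lemma uniq_interleave s t : uniq s -> uniq t -> (forall u, u \in s -> u \notin t) ->
  uniq (interleave s t).
Proof.
elim: s t => [|a s IH] [|b t] // /andP[a_s uniq_s] /andP[b_t uniq_t] st.
have notin u : u \notin s -> u \notin t -> u \notin interleave s t.
  by move=> us ut; apply/negP => /mem_interleave; rewrite (negbTE us) (negbTE ut).
have := st a (mem_head _ _); rewrite inE negb_or => /andP[ab a_t].
have b_s : b \notin s.
  by apply/negP => bs; move: (st b); rewrite !inE bs eqxx !orbT => /(_ isT).
rewrite interleave_cons /= inE negb_or ab !notin // IH // => u us.
by move: (st u); rewrite !inE us orbT negb_or => /(_ isT)/andP[].
Qed.

Lemma cycle_interleave (r : rel X) x0 s t : size t = size s -> 0 < size s ->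
  (forall i, i < size s ->
     r (nth x0 s i) (nth x0 t i) /\ r (nth x0 t i) (nth x0 s (i.+1 %% size s))) ->
  cycle r (interleave s t).
Proof.
move=> size_t s_gt0 hr; apply: (cycle_from_nth (x0 := x0)); rewrite size_interleave //.
  by rewrite double_gt0.
move=> j; rewrite -[j in nth _ _ j](odd_double_half j) -[j in j.+1](odd_double_half j).
have [nth_even nth_odd] := nth_interleave x0 j./2 size_t.
case: (odd j) => /=; rewrite ?add1n ?add0n => lt_j.
  have lt_i : j./2 < size s by rewrite -ltn_double (leq_trans _ lt_j).
  rewrite nth_odd -doubleS -!muln2 -muln_modl !muln2 (proj1 (nth_interleave x0 _ size_t)).
  exact: (hr _ lt_i).2.
have lt_i : j./2 < size s by rewrite -ltn_double.
have lt_j1 : (j./2).*2.+1 < (size s).*2 by rewrite -doubleS leq_double.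
by rewrite nth_even modn_small // nth_odd; exact: (hr _ lt_i).1.
Qed.
End Interleave.

Section SimpleGraph.
Variables (T : finType) (e : rel T).
Hypotheses (e_sym : symmetric e) (e_irr : irreflexive e).

Definition acyclic (S : {set T}) := forall c, ~ is_cycle e S c.

Definition stable (S : {set T}) := forall u v, u \in S -> v \in S -> ~~ e u v.

(* An edge {a, b} is stored once, as the pair ordered by [enum_rank], so that no
   two multigraph edges are parallel. *)
Definition edge_pairs (S : {set T}) := [set p : T * T |
  [&& p.1 \in S, p.2 \in S, e p.1 p.2 & enum_rank p.1 < enum_rank p.2]].

Definition edge_pair (a b : T) := if enum_rank a < enum_rank b then (a, b) else (b, a).

Lemma edge_pairs_joins (S : {set T}) p a b : p \in edge_pairs S -> joins id p a b ->
  [&& a \in S, b \in S & e a b].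
Proof.
rewrite inE /joins => /and4P[h1 h2 h3 _] /orP[]/eqP pE; rewrite pE /= in h1 h2 h3.
  by rewrite h1 h2 h3.
by rewrite h1 h2 e_sym h3.
Qed.

Lemma edge_pairs_joins_inj (S : {set T}) p q a b :
  p \in edge_pairs S -> q \in edge_pairs S ->
  joins id p a b -> joins id q a b -> p = q.
Proof.
rewrite !inE /joins => /and4P[_ _ _ lt_p] /and4P[_ _ _ lt_q].
move=> /orP[]/eqP pE /orP[]/eqP qE; rewrite pE qE /= in lt_p lt_q * => //;
  by move: (ltn_trans lt_p lt_q); rewrite ltnn.
Qed.

Lemma edge_pair_in (S : {set T}) a b : a \in S -> b \in S -> e a b ->
  edge_pair a b \in edge_pairs S.
Proof.
move=> aS bS eab; rewrite /edge_pair inE; case: ifP => /= lt_ab; first by rewrite aS bS eab.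
rewrite aS bS e_sym eab /= ltn_neqAle leqNgt lt_ab andbT eq_sym.
apply: contraTneq eab.
by move=> /val_inj/enum_rank_inj ->; rewrite e_irr.
Qed.

Lemma incident_edge_pair a b : incident id (edge_pair a b) a.
Proof. by rewrite /edge_pair /incident; case: ifP; rewrite /= eqxx ?orbT. Qed.

Lemma edge_pair_inj v u1 u2 : e v u1 -> e v u2 ->
  edge_pair v u1 = edge_pair v u2 -> u1 = u2.
Proof.
rewrite /edge_pair => e1 e2; do 2 case: ifP => _; case=> //.
- by move=> E1 _; move: e2; rewrite -E1 e_irr.
- by move=> E1 _; move: e1; rewrite E1 e_irr.
Qed.

Lemma mcycle_edge_pairs (S : {set T}) vs es :
  mcycle id vs es -> {subset es <= edge_pairs S} ->
  is_cycle e S vs.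
Proof.
move=> cyc esS; have [vs_gt0 size_es uniq_vs uniq_es _] := cyc.
case: vs vs_gt0 cyc uniq_vs size_es => [//|x0 vs'] _ cyc uniq_vs size_es.
set vs := x0 :: vs' in cyc uniq_vs size_es *.
have joins_i i : i < size vs ->
    joins id (nth (x0, x0) es i) (nth x0 vs i) (nth x0 vs (i.+1 %% size vs)).
  exact: mcycle_joins.
have in_i i : i < size vs -> nth (x0, x0) es i \in edge_pairs S.
  by move=> lt_i; rewrite esS // mem_nth // size_es.
have adj i : i < size vs ->
    [&& nth x0 vs i \in S, nth x0 vs (i.+1 %% size vs) \in S &
        e (nth x0 vs i) (nth x0 vs (i.+1 %% size vs))].
  by move=> lt_i; apply: edge_pairs_joins (in_i i lt_i) (joins_i i lt_i).
split=> //.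
- case size_vs: (size vs) => [//|[|[|k]]] //.
    by have := adj 0; rewrite size_vs modnn /= e_irr !andbF => /(_ isT).
  have j0 := joins_i 0; have j1 := joins_i 1; rewrite size_vs /= in j0 j1.
  have := edge_pairs_joins_inj (in_i 0 _) (in_i 1 _) (j0 isT).
  rewrite joins_sym => /(_ _ _ (j1 isT)) /eqP.
  by rewrite size_vs nth_uniq ?size_es ?size_vs //; apply.
- by move=> v /(nthP x0)[i lt_i <-]; case/and3P: (adj i lt_i).
by apply: (cycle_from_nth (x0 := x0)) => // i lt_i; case/and3P: (adj i lt_i).
Qed.

Lemma acyclic_leaf (S : {set T}) x : acyclic S -> x \in S ->
  exists2 v, v \in S & #|[set u in S | e v u]| <= 1.
Proof.
move=> acyc xS.
case: (boolP [exists v in S, #|[set u in S | e v u]| <= 1]) => [/exists_inP[v]|].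
  by exists v.
rewrite negb_exists => /forallP deg2; exfalso.
have [|v vS|vs [es [cyc /mcycle_edge_pairs]]] :=
  @mcycle_of_min_degree _ _ id S (edge_pairs S) _ _ x xS.
- by move=> p; rewrite inE => /and4P[-> -> _ _].
- move: (deg2 v); rewrite vS -ltnNge => /card_gt1P[u1 [u2 []]].
  rewrite !inE => /andP[u1S e1] /andP[u2S e2] u12.
  have at_v u : u \in S -> e v u ->
      edge_pair v u \in [set f in edge_pairs S | incident id f v].
    by move=> uS evu; rewrite in_set edge_pair_in ?incident_edge_pair.
  apply/card_gt1P; exists (edge_pair v u1), (edge_pair v u2); rewrite !at_v //.
  by split=> //; apply: contra_neq u12; apply: edge_pair_inj.
by move/(_ vs cyc); apply: acyc.
Qed.

Lemma acyclic_two_colouring (S : {set T}) : acyclic S ->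
  exists col : T -> bool, {in S &, forall u v, e u v -> col u != col v}.
Proof.
elim: {S}_.+1 {-2}S (ltnSn #|S|) => // n IH S ltSn acyc.
case: (set_0Vmem S) => [->|[x xS]]; first by exists xpred0 => u v; rewrite inE.
have [v vS deg_v] := acyclic_leaf acyc xS.
have [col col_ok] : exists col : T -> bool,
    {in S :\ v &, forall u w, e u w -> col u != col w}.
  apply: IH; first by move: ltSn; rewrite (cardsD1 v S) vS.
  by move=> c [h1 h2 h3 h4]; apply: (acyc c); split=> // y /h3; rewrite inE => /andP[].
pose col' y := if y == v then
  (if [pick u in S | e v u] is Some u then ~~ col u else true) else col y.
have col'_v w : w \in S -> e v w -> col' v != col' w.
  move=> wS evw; have wv : w != v by apply: contraTneq evw => ->; rewrite e_irr.
  rewrite /col' eqxx (negbTE wv).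
  case: pickP => [u /andP[uS evu]|none]; last by move: (none w); rewrite wS evw.
  have -> : u = w by apply: (card_le1_eqP deg_v); rewrite inE ?uS ?evu ?wS ?evw.
  by case: (col w).
exists col' => u w uS wS euw.
case: (u =P v) => [uv|nu]; first by rewrite uv; apply: col'_v; rewrite // -uv.
case: (w =P v) => [wv|nw].
  by rewrite eq_sym wv; apply: col'_v; rewrite // e_sym -wv.
rewrite /col' (introF eqP nu) (introF eqP nw); apply: col_ok => //;
  by rewrite !inE ?uS ?wS andbT; apply/eqP.
Qed.

Lemma acyclic_bipartition (S : {set T}) : acyclic S ->
  exists S1 S2 : {set T}, [/\ S1 :|: S2 = S, stable S1 & stable S2].
Proof.
case/acyclic_two_colouring=> col col_ok.
exists [set u in S | col u], [set u in S | ~~ col u]; split.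
- by apply/setP=> u; rewrite !inE -andb_orr orbN andbT.
- move=> u v; rewrite !inE => /andP[uS cu] /andP[vS cv].
  by apply/negP => /(col_ok u v uS vS); rewrite cu cv.
move=> u v; rewrite !inE => /andP[uS /negbTE cu] /andP[vS /negbTE cv].
by apply/negP => /(col_ok u v uS vS); rewrite cu cv.
Qed.
End SimpleGraph.

Section BinaryMultigraph.
Variables (T : finType) (e : rel T).
Hypothesis e_sym : symmetric e.
Variables (W Z : {set T}).
Hypotheses (Z_sub : Z \subset W) (Z_stable : stable e Z).

Local Notation binary := (binary_vertices e W Z).

Lemma binary_notin b : b \in binary -> b \notin Z.
Proof. by rewrite !inE => /andP[/andP[]]. Qed.

Lemma binary_in b : b \in binary -> b \in W.
Proof. by rewrite !inE => /andP[/andP[]]. Qed.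

Lemma acyclic_binary : cycle_hitting e W Z -> acyclic e binary.
Proof.
move=> hit c [size_c uniq_c sub_c cyc_c].
have /hasP[v vc vZ] : has (fun v => v \in Z) c.
  by apply: hit; split=> // u /sub_c /binary_in.
by move: (binary_notin (sub_c v vc)); rewrite vZ.
Qed.

Definition binary_ends (b : T) : T * T :=
  let l := enum (nbrs_in e Z b) in (nth b l 0, nth b l 1).

Lemma nbrs_binary b : b \in binary ->
  (binary_ends b).1 != (binary_ends b).2 /\
  nbrs_in e Z b = [set (binary_ends b).1; (binary_ends b).2].
Proof.
rewrite inE cardE => /andP[_]; rewrite /binary_ends.
have := mem_enum (nbrs_in e Z b); have := enum_uniq (nbrs_in e Z b).
case: (enum _) => [|a [|c []]] //= uniq_ac mem_ac _.
split; first by move: uniq_ac; rewrite inE andbT.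
by apply/setP=> z; rewrite -mem_ac !inE.
Qed.

Lemma binary_ends_nbrs b : b \in binary ->
  ((binary_ends b).1 \in nbrs_in e Z b) && ((binary_ends b).2 \in nbrs_in e Z b).
Proof. by case/nbrs_binary=> _ ->; rewrite !inE !eqxx orbT. Qed.

Lemma joins_binary b x y : b \in binary -> joins binary_ends b x y ->
  x != y /\ nbrs_in e Z b = [set x; y].
Proof.
move=> /nbrs_binary[ne nbrs]; rewrite /joins.
case/orP=> /eqP E; rewrite E /= in ne nbrs; first by [].
by rewrite eq_sym setUC.
Qed.

Variables (Bc : {set T}) (Bc_binary : Bc \subset binary) (Bc_stable : stable e Bc).

Definition bin_edge := {b : T | b \in Bc}.

Definition bin_ends (f : bin_edge) : T * T := binary_ends (val f).

Lemma bin_edge_binary (f : bin_edge) : val f \in binary.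
Proof. exact: subsetP Bc_binary _ (valP f). Qed.

Lemma mcycle_bin_ends vs es x0 f0 i : mcycle bin_ends vs es -> i < size vs ->
  nth x0 vs i != nth x0 vs (i.+1 %% size vs) /\
  nbrs_in e Z (val (nth f0 es i)) = [set nth x0 vs i; nth x0 vs (i.+1 %% size vs)].
Proof. by move=> cyc /(mcycle_joins x0 f0 cyc) /(joins_binary (bin_edge_binary _)). Qed.

Lemma mcycle_bin_ends_in_Z vs es : mcycle bin_ends vs es -> {subset vs <= Z}.
Proof.
move=> cyc v /(nthP v)[i lt_i <-]; case: (cyc) => vs_gt0 _ _ _ /(_ 0 vs_gt0)[_ [f0 _]].
have [_ /setP/(_ (nth v vs i))] := mcycle_bin_ends v f0 cyc lt_i.
by rewrite !inE eqxx => /andP[].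
Qed.

Lemma mcycle_bin_ends_nbr vs es f z : mcycle bin_ends vs es -> f \in es ->
  z \in Z -> e (val f) z -> z \in vs.
Proof.
move=> cyc /(nthP f)[i lt_i <-] zZ ez; case: (cyc) => _ size_es _ _ _.
rewrite size_es in lt_i; have [_ /setP/(_ z)] := mcycle_bin_ends z f cyc lt_i.
rewrite !inE zZ ez => /esym/orP[]/eqP->; apply: mem_nth => //.
by rewrite ltn_pmod // (leq_ltn_trans _ lt_i).
Qed.

Lemma mcycle_bin_ends_size vs es : mcycle bin_ends vs es -> 1 < size vs.
Proof.
move=> cyc; case: (cyc) => vs_gt0 _ _ _ /(_ 0 vs_gt0)[x0 [f0 _]].
have [] := mcycle_bin_ends x0 f0 cyc vs_gt0.
by case: (size vs) vs_gt0 => [|[|k]] //; rewrite modnn eqxx.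
Qed.

Definition graph_cycle (vs : seq T) (es : seq bin_edge) := interleave vs (map val es).

Lemma mem_graph_cycle vs es u : u \in graph_cycle vs es ->
  u \in vs \/ exists2 f, f \in es & u = val f.
Proof. by case/mem_interleave/orP=> [|/mapP]; [left | right]. Qed.

Lemma is_cycle_graph_cycle vs es :
  mcycle bin_ends vs es -> is_cycle e W (graph_cycle vs es).
Proof.
move=> cyc; have [vs_gt0 size_es uniq_vs uniq_es /(_ 0 vs_gt0)[x0 [f0 _]]] := cyc.
have size_val : size (map val es) = size vs by rewrite size_map.
split.
- by rewrite size_interleave // -addnn (leq_add (mcycle_bin_ends_size cyc)).
- apply: uniq_interleave => //; first by rewrite map_inj_uniq //; apply: val_inj.
  move=> u /(mcycle_bin_ends_in_Z cyc) uZ; apply/mapP=> -[f _ uf].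
  by move: (binary_notin (bin_edge_binary f)); rewrite -uf uZ.
- move=> u /mem_graph_cycle[/(mcycle_bin_ends_in_Z cyc)/(subsetP Z_sub) //|[f _ ->]].
  exact: binary_in (bin_edge_binary f).
apply: (cycle_interleave (x0 := x0)) => // i lt_i.
have [_ /setP nbrs] := mcycle_bin_ends x0 f0 cyc lt_i.
have := nbrs (nth x0 vs i); have := nbrs (nth x0 vs (i.+1 %% size vs)).
rewrite (nth_map f0) ?size_es // /nbrs_in !inE !eqxx ?orbT => /andP[_ e2] /andP[_ e1].
by rewrite e_sym e1.
Qed.

Lemma graph_cycles_vertex_edge vs1 es1 vs2 es2 v f :
  mcycle bin_ends vs1 es1 -> mcycle bin_ends vs2 es2 ->
  (forall u, u \in vs1 -> u \notin vs2) -> v \in vs1 -> f \in es2 ->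
  v != val f /\ ~~ e v (val f).
Proof.
move=> cyc1 cyc2 disj v_vs1 f_es2; have vZ := mcycle_bin_ends_in_Z cyc1 v_vs1.
split; first by apply: contraTneq vZ => ->; apply: binary_notin (bin_edge_binary f).
apply: contraNN (disj v v_vs1) => evf.
by apply: mcycle_bin_ends_nbr cyc2 f_es2 vZ _; rewrite e_sym.
Qed.

Lemma graph_cycles_anticomplete vs1 es1 vs2 es2 :
  mcycle bin_ends vs1 es1 -> mcycle bin_ends vs2 es2 ->
  (forall u, u \in vs1 -> u \notin vs2) ->
  forall u w, u \in graph_cycle vs1 es1 -> w \in graph_cycle vs2 es2 -> u != w /\ ~~ e u w.
Proof.
move=> cyc1 cyc2 disj12 u w.
have disj21 v : v \in vs2 -> v \notin vs1 by apply: contraTN => /disj12.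
case/mem_graph_cycle=> [u_vs1|[f f_es1 ->]]; case/mem_graph_cycle=> [w_vs2|[g g_es2 ->]].
- split; first by apply: contraTneq w_vs2 => <-; apply: disj12.
  apply: Z_stable; [exact: (mcycle_bin_ends_in_Z cyc1) | exact: (mcycle_bin_ends_in_Z cyc2)].
- exact: graph_cycles_vertex_edge cyc1 cyc2 disj12 u_vs1 g_es2.
- have [] := graph_cycles_vertex_edge cyc2 cyc1 disj21 w_vs2 f_es1.
  by rewrite eq_sym e_sym.
split; last by apply: Bc_stable; apply: valP.
apply/negP => /eqP/val_inj fg; rewrite -{g}fg in g_es2.
have /andP[/[!inE] /andP[aZ efa] _] := binary_ends_nbrs (bin_edge_binary f).
have := disj12 _ (mcycle_bin_ends_nbr cyc1 f_es1 aZ efa).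
by rewrite (mcycle_bin_ends_nbr cyc2 g_es2 aZ efa).
Qed.

Lemma sO_free_no_disjoint_mcycles s : sO_free e s W ->
  ~ exists C : 'I_s -> seq T * seq bin_edge,
      (forall i, mcycle bin_ends (C i).1 (C i).2) /\
      (forall i j, i != j -> forall v, v \in (C i).1 -> v \notin (C j).1).
Proof.
move=> free [C [cyc disj]]; apply: free.
exists (fun i => graph_cycle (C i).1 (C i).2); split=> [i|i j ij].
  exact: is_cycle_graph_cycle.
exact: graph_cycles_anticomplete (cyc i) (cyc j) (disj i j ij).
Qed.

Lemma stable_binary_hitting phi s : erdos_posa_bound phi -> sO_free e s W ->
  exists X : {set T}, [/\ X \subset Z, #|X| <= phi s &
    forall Y : {set T}, X \subset Y ->
      #|[set b in Bc | [forall y in Y, ~~ e y b]]| <= #|Z|].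
Proof.
move=> hphi free.
have [X0 [card_X0 hit]] := hphi s T bin_edge bin_ends (sO_free_no_disjoint_mcycles free).
exists (X0 :&: Z); split; first exact: subsetIr.
  exact: leq_trans (subset_leq_card (subsetIl _ _)) card_X0.
move=> Y sub_Y; pose F := [set f : bin_edge | [forall y in Y, ~~ e y (val f)]].
have -> : [set b in Bc | [forall y in Y, ~~ e y b]] = val @: F.
  apply/setP=> b; rewrite inE; apply/andP/imsetP => [[bBc hb]|[f]].
    by exists (Sub b bBc); rewrite ?inE.
  by rewrite inE => hf ->; split; first exact: valP.
apply: leq_trans (leq_imset_card val F) _.
apply: leq_trans (subset_leq_card (subsetDl Z Y)).
apply: (card_acyclic_le (ends := bin_ends)).
  move=> f; rewrite inE => /forall_inP hf.
  case/andP: (binary_ends_nbrs (bin_edge_binary f)); rewrite /bin_ends !inE.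
  move=> /andP[-> e1] /andP[-> e2]; rewrite !andbT.
  by apply/andP; split; apply/negP => /hf; rewrite e_sym ?e1 ?e2.
move=> vs es cyc es_F; have /hasP[v v_vs vX0] := hit vs es cyc.
have vZ := mcycle_bin_ends_in_Z cyc v_vs.
have vY : v \in Y by apply: (subsetP sub_Y); rewrite inE vX0.
case/(nthP v): v_vs => i lt_i vi; case: (cyc) => _ size_es _ _ /(_ i lt_i)[_ [f0 _]].
have [_ /setP/(_ v)] := mcycle_bin_ends v f0 cyc lt_i; rewrite vi !inE eqxx vZ /= => efv.
have lt_ies : i < size es by rewrite size_es.
have /es_F := mem_nth f0 lt_ies.
by rewrite inE => /forall_inP/(_ v vY); rewrite e_sym efv.
Qed.
End BinaryMultigraph.

Section Explosion.
Variables (T : finType) (e : rel T).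

Definition exploded_vertices (W Z X : {set T}) :=
  [set u in W :\: X | (u \in Z) || [forall x in X, ~~ e x u]].

Lemma foldl_explode1 (l : seq T) (W Z : {set T}) :
  foldl (explode1 e) (W, Z) l =
  ([set u in W | (u \notin l) && ((u \in Z) || ~~ has (e^~ u) l)],
   [set u in Z | u \notin l]).
Proof.
elim: l W Z => [|v l IH] W Z /=.
  by congr pair; apply/setP => u; rewrite inE ?orbT ?andbT.
rewrite IH; congr pair; apply/setP => u; rewrite !inE.
  by case: (u == v); case: (u \in W); case: (u \in Z); case: (u \in l); case: (e v u);
     case: (has _ l).
by case: (u == v); case: (u \in Z); case: (u \in l).
Qed.

Lemma explodeE W Z X : explode e W Z X = (exploded_vertices W Z X, Z :\: X).
Proof.
rewrite /explode foldl_explode1; congr pair; apply/setP=> u; rewrite !inE mem_enum.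
  have -> : ~~ has (e^~ u) (enum X) = [forall x in X, ~~ e x u].
    by apply/hasPn/forall_inP => hX x xX; apply: hX; rewrite ?mem_enum in xX *.
  by case: (u \in X); case: (u \in W).
by rewrite andbC.
Qed.

Variables (W Z X : {set T}).

Lemma exploded_sub : exploded_vertices W Z X \subset W.
Proof. by apply/subsetP=> u; rewrite !inE => /andP[/andP[]]. Qed.

Lemma exploded_notin_Z u : u \in exploded_vertices W Z X -> u \notin Z :\: X -> u \notin Z.
Proof. by rewrite !inE => /andP[/andP[-> _] _]. Qed.

Lemma is_cycle_exploded c : is_cycle e (exploded_vertices W Z X) c -> is_cycle e W c.
Proof. by case=> ? ? sub ?; split=> // u /sub /(subsetP exploded_sub). Qed.

Lemma plantation_exploded s : plantation e s W Z ->
  plantation e s (exploded_vertices W Z X) (Z :\: X).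
Proof.
case=> Z_sub free hit; split.
- apply/subsetP=> u; rewrite !inE => /andP[uX uZ].
  by rewrite uX uZ (subsetP Z_sub).
- move=> [C [cyc anti]]; apply: free; exists C; split=> // i.
  exact: is_cycle_exploded.
move=> c cyc; have /hasP[v vc vZ] := hit c (is_cycle_exploded cyc).
apply/hasP; exists v => //; case: cyc => _ _ /(_ v vc) + _.
by rewrite !inE vZ andbT => /andP[/andP[]].
Qed.

Lemma dyadic_exploded : dyadic e W Z -> dyadic e (exploded_vertices W Z X) (Z :\: X).
Proof.
case=> Z_stable deg; split.
  by move=> u v; rewrite !inE => /andP[_ uZ] /andP[_ vZ]; apply: Z_stable.
move=> v /setDP[vW' vZ']; apply: leq_trans (deg v _).
  by apply/subset_leq_card/subsetP=> u; rewrite !inE => /andP[/andP[_ ->]].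
by rewrite inE exploded_notin_Z // (subsetP exploded_sub).
Qed.

Lemma binary_exploded : symmetric e ->
  binary_vertices e (exploded_vertices W Z X) (Z :\: X) \subset
  [set b in binary_vertices e W Z | [forall x in X, ~~ e x b]].
Proof.
move=> e_sym; apply/subsetP=> b /setIdP[/setDP[bW' bZ'] card2].
have bZ := exploded_notin_Z bW' bZ'.
have bX : [forall x in X, ~~ e x b] by move: bW'; rewrite inE (negbTE bZ) => /andP[].
have nbrsE : nbrs_in e (Z :\: X) b = nbrs_in e Z b.
  apply/setP=> z; rewrite !inE; case zX: (z \in X) => //=.
  by move/forall_inP: bX => /(_ z zX); rewrite e_sym => /negbTE->; rewrite andbF.
by rewrite !inE bX andbT bZ (subsetP exploded_sub _ bW') -nbrsE.
Qed.
End Explosion.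

Theorem mainTheorem14 (phi : nat -> nat) (hphi : erdos_posa_bound phi)
  (s : nat) (hs : 1 <= s) (T : finType) (e : rel T) (hG : simple_graph e)
  (Z : {set T}) (hP : plantation e s [set: T] Z) (hD : dyadic e [set: T] Z) :
  exists X : {set T},
    [/\ X \subset Z, #|X| <= 2 * phi s &
        let: (W', Z') := explode e [set: T] Z X in
        [/\ plantation e s W' Z', dyadic e W' Z' &
            #|binary_vertices e W' Z'| <= 2 * #|Z|]].
Proof.
case: hG => e_sym e_irr; case: (hP) => Z_sub free hit; case: (hD) => Z_stable _.
have [B1 [B2 [B12 B1_stable B2_stable]]] :=
  acyclic_bipartition e_sym e_irr (acyclic_binary hit).
have B1_sub : B1 \subset binary_vertices e [set: T] Z by rewrite -B12 subsetUl.
have B2_sub : B2 \subset binary_vertices e [set: T] Z by rewrite -B12 subsetUr.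
have [X1 [X1_Z card_X1 bound1]] :=
  stable_binary_hitting e_sym Z_sub Z_stable B1_sub B1_stable hphi free.
have [X2 [X2_Z card_X2 bound2]] :=
  stable_binary_hitting e_sym Z_sub Z_stable B2_sub B2_stable hphi free.
exists (X1 :|: X2); split.
- by rewrite subUset X1_Z X2_Z.
- by rewrite mul2n -addnn (leq_trans (leq_card_setU _ _)) // leq_add.
rewrite explodeE; split; [exact: plantation_exploded | exact: dyadic_exploded |].
apply: leq_trans (subset_leq_card (binary_exploded _ _ _ e_sym)) _.
rewrite -B12 mul2n -addnn.
apply: leq_trans (leq_add (bound1 _ (subsetUl X1 X2)) (bound2 _ (subsetUr X1 X2))).
apply: leq_trans (leq_card_setU _ _); apply/subset_leq_card/subsetP => b.
by rewrite !inE andb_orl.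
Qed.
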